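(* Let $d\ge 1$ and let $\Phi_1,\dots,\Phi_N:\mathcal L(\mathbb C^d)\to\mathcal L(\mathbb C^d)$ be quantum channels. Suppose there exist orthonormal bases $\mathbf e^{(1)},\dots,\mathbf e^{(N)}$ of $\mathbb C^d$ such that the value of the semidefinite program $$\min\Big\{\operatorname{Tr} H \;:\; H \text{ Hermitian on } \mathbb C^d\otimes\mathbb C^d,\ H\ge G_{\Phi_i,\mathbf e^{(i)}}\ \text{for all } i\in[N]\Big\}$$ is strictly larger than $d$. Then the $N$-tuple $(\Phi_1,\dots,\Phi_N)$ is incompatible.
   Context: A quantum channel is a completely positive trace-preserving linear map; $\Phi^*$ denotes its adjoint with respect to the Hilbert–Schmidt inner product $\langle X,Y\rangle=\operatorname{Tr}(X^*Y)$. Channels $\Phi_1,\dots,\Phi_N:\mathcal L(\mathbb C^d)\to\mathcal L(\mathbb C^d)$ are compatible if there is a channel $\Lambda:\mathcal L(\mathbb C^d)\to\mathcal L((\mathbb C^d)^{\otimes N})$ whose marginals are the $\Phi_i$, i.e. $\Phi_i(X)$ equals the partial trace of $\Lambda(X)$ over all tensor factors except the $i$-th, for every $X$; otherwise they are incompatible. For an operator $X=\sum_{i,j}X_{ij}|i\rangle\langle j|$ on $\mathbb C^d$, let $|X\rangle:=\sum_{i,j}X_{ij}|i\rangle\otimes|j\rangle\in\mathbb C^d\otimes\mathbb C^d$. For a channel $\Phi$ on $\mathcal L(\mathbb C^d)$ and an orthonormal basis $\mathbf e=(e_i)_{i=1}^d$, define $$G_{\Phi,\mathbf e}:=\sum_{i=1}^d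 \frac{|\Phi^*(|e_i\rangle\langle e_i|)\rangle\langle\Phi^*(|e_i\rangle\langle e_i|)|}{\operatorname{Tr}\Phi^*(|e_i\rangle\langle e_i|)},$$ where terms with zero denominator are omitted. $H\ge G$ is the positive semidefinite order. *)

From HB Require Import structures.
From mathcomp Require Import all_boot all_order all_algebra.
From mathcomp Require Import complex.
From mathcomp Require Import reals.
Set Implicit Arguments. Unset Strict Implicit. Unset Printing Implicit Defensive.
Import Order.TTheory GRing.Theory Num.Theory.
Local Open Scope ring_scope.

Section Quantum.
Variable C : numClosedFieldType.

(* An operator on the Hilbert space with orthonormal (computational) basis
   indexed by the finite type I, given by its matrix entries <p|X|q>. *)
Definition op (I : finType) := I -> I -> C.

(* Positive semidefinite: <v, A v> >= 0 for every vector v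
   (0 <= z in a numClosedField means z is real and nonnegative). *)
Definition psd (I : finType) (A : op I) : Prop :=
  forall v : I -> C, 0 <= \sum_(p : I) \sum_(q : I) (v p)^* * A p q * v q.

Definition hermitian_op (I : finType) (A : op I) : Prop :=
  forall p q : I, A q p = (A p q)^*.

Definition trace (I : finType) (A : op I) : C := \sum_(p : I) A p p.

Definition hs (I : finType) (X Y : op I) : C :=
  \sum_(p : I) \sum_(q : I) (X p q)^* * Y p q.

Definition unit_op (I : finType) (i j : I) : op I :=
  fun p q => ((p == i) && (q == j))%:R.

Definition linear_map (I J : finType) (Phi : op I -> op J) : Prop :=
  forall (a : C) (X Y : op I),
    Phi (fun p q => a * X p q + Y p q) = (fun p q => a * Phi X p q + Phi Y p q).

Definition trace_preserving (I J : finType) (Phi : op I -> op J) : Prop :=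
  forall X : op I, trace (Phi X) = trace X.

(* Completely positive: id_k (x) Phi is positive for every k.
   An operator Y on C^k (x) H_I has entries Y (a,p) (c,q); its (a,c) block is
   fun p q => Y (a,p) (c,q), and (id_k (x) Phi)(Y) has (a,c) block Phi(block). *)
Definition completely_positive (I J : finType) (Phi : op I -> op J) : Prop :=
  forall (k : nat) (Y : op ('I_k * I)%type), psd Y ->
    psd (fun (x y : ('I_k * J)%type) =>
           Phi (fun p q => Y (x.1, p) (y.1, q)) x.2 y.2).

Definition channel (I J : finType) (Phi : op I -> op J) : Prop :=
  [/\ linear_map Phi, completely_positive Phi & trace_preserving Phi].

(* Adjoint w.r.t. the Hilbert-Schmidt inner product:
   <X, Phi^*(Y)> = <Phi(X), Y>; evaluated on matrix units,
   Phi^*(Y) p q = <E_pq, Phi^*(Y)> = <Phi(E_pq), Y>. *)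
Definition adjoint (I J : finType) (Phi : op I -> op J) (Y : op J) : op I :=
  fun p q => hs (Phi (unit_op p q)) Y.

Definition orthonormal_basis (d : nat) (e : 'I_d -> 'I_d -> C) : Prop :=
  forall i j : 'I_d, \sum_(p < d) (e i p)^* * e j p = (i == j)%:R.

Definition proj_op (d : nat) (v : 'I_d -> C) : op 'I_d :=
  fun p q => v p * (v q)^*.

(* |X><X| on C^d (x) C^d where |X> = sum_{ij} X_ij |i> (x) |j>. *)
Definition vec_outer (d : nat) (X : op 'I_d) : op ('I_d * 'I_d)%type :=
  fun x y => X x.1 x.2 * (X y.1 y.2)^*.

(* G_{Phi,e}: terms with zero denominator are omitted. *)
Definition G_op (d : nat) (Phi : op 'I_d -> op 'I_d) (e : 'I_d -> 'I_d -> C)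
  : op ('I_d * 'I_d)%type :=
  fun x y => \sum_(i < d | trace (adjoint Phi (proj_op (e i))) != 0)
     vec_outer (adjoint Phi (proj_op (e i))) x y
       / trace (adjoint Phi (proj_op (e i))).

Definition op_ge (I : finType) (H G : op I) : Prop := psd (fun p q => H p q - G p q).

(* Partial trace of an operator on (C^d)^{(x) N} (basis indexed by
   x : {ffun 'I_N -> 'I_d}) over all tensor factors except the i-th. *)
Definition ptrace_keep (d N : nat) (i : 'I_N) (A : op {ffun 'I_N -> 'I_d})
  : op 'I_d :=
  fun a b => \sum_(x : {ffun 'I_N -> 'I_d} | x i == a)
             \sum_(y : {ffun 'I_N -> 'I_d} | (y i == b) && [forall j, (j != i) ==> (x j == y j)])
               A x y.

Definition compatible (d N : nat) (Phi : 'I_N -> op 'I_d -> op 'I_d) : Prop :=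
  exists Lambda : op 'I_d -> op {ffun 'I_N -> 'I_d},
    channel Lambda /\
    forall (i : 'I_N) (X : op 'I_d), ptrace_keep i (Lambda X) = Phi i X.

End Quantum.

From HB Require Import structures.
From mathcomp Require Import all_boot all_order all_algebra.
From mathcomp Require Import complex.
From mathcomp Require Import reals.
From mathcomp Require Import ring.
From Stdlib Require Import FunctionalExtensionality.
Set Implicit Arguments. Unset Strict Implicit. Unset Printing Implicit Defensive.
Import Order.TTheory GRing.Theory Num.Theory.
Local Open Scope ring_scope.

(* Suppose a joint channel L existed. With the product basis
   w_j = e^(1)_{j_1} (x) ... (x) e^(N)_{j_N}, put M_j = L^*(|w_j><w_j|).
   Complete positivity makes every M_j positive semidefinite, unitality of L^*
   gives sum_j Tr M_j = d, and the marginal conditions give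
   Phi_k^*(|e^(k)_i><e^(k)_i|) = sum_{j : j_k = i} M_j.  Hence
   H = sum_j |M_j><M_j| / Tr M_j is feasible for the semidefinite program:
   H >= G_{Phi_k, e^(k)} by convexity of (a, t) |-> |a|^2 / t, and
   Tr H = sum_j |M_j|_2^2 / Tr M_j <= sum_j Tr M_j = d, a contradiction. *)

Section PsdForms.
Variables (C : numClosedFieldType) (I : finType).
Implicit Types (A : op C I) (u w : I -> C).

Definition form A u w : C := \sum_p \sum_q (u p)^* * A p q * w q.

Lemma formZDl A (a : C) u1 u2 w :
  form A (fun x => a * u1 x + u2 x) w = a^* * form A u1 w + form A u2 w.
Proof.
rewrite /form mulr_sumr -big_split /=; apply: eq_bigr => p _.
rewrite mulr_sumr -big_split /=; apply: eq_bigr => q _.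
rewrite rmorphD rmorphM /=; ring.
Qed.

Lemma formZDr A (a : C) u w1 w2 :
  form A u (fun x => a * w1 x + w2 x) = a * form A u w1 + form A u w2.
Proof.
rewrite /form mulr_sumr -big_split /=; apply: eq_bigr => p _.
rewrite mulr_sumr -big_split /=; apply: eq_bigr => q _; ring.
Qed.

Lemma form_lincomb A (s t : C) u w :
  form A (fun x => s * u x + t * w x) (fun x => s * u x + t * w x) =
  s^* * s * form A u u + s^* * t * form A u w
  + t^* * s * form A w u + t^* * t * form A w w.
Proof.
rewrite /form !mulr_sumr -!big_split /=; apply: eq_bigr => p _.
rewrite !mulr_sumr -!big_split /=; apply: eq_bigr => q _.
rewrite rmorphD !rmorphM /=; ring.
Qed.

Lemma form_sub A B u w :
  form (fun x y => A x y - B x y) u w = form A u w - form B u w.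
Proof.
rewrite /form -sumrB; apply: eq_bigr => x _; rewrite -sumrB.
by apply: eq_bigr => y _; ring.
Qed.

Definition basis_vec (p : I) : I -> C := fun x => (x == p)%:R.

Lemma sum_delta_l (p : I) (f : I -> C) : \sum_x (x == p)%:R * f x = f p.
Proof. by rewrite (bigD1 p) //= eqxx mul1r big1 ?addr0 // => x /negPf ->; rewrite mul0r. Qed.

Lemma sum_delta_r (p : I) (f : I -> C) : \sum_x f x * (x == p)%:R = f p.
Proof. by rewrite -[RHS](sum_delta_l p); apply: eq_bigr => x _; rewrite mulrC. Qed.

Lemma form_basis_vec A p q : form A (basis_vec p) (basis_vec q) = A p q.
Proof.
rewrite /form /basis_vec -[RHS](sum_delta_l p (fun x => A x q)); apply: eq_bigr => x _.
rewrite rmorph_nat -(sum_delta_r q (A x)) mulr_sumr.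
by apply: eq_bigr => y _; rewrite mulrA.
Qed.

Section Psd.
Variable A : op C I.
Hypothesis psdA : psd A.

(* Polarization: the form is real on [u + w] and on [i u + w]. *)
Lemma psd_form_conj u w : form A w u = (form A u w)^*.
Proof.
set a := form A u u; set c := form A w w; set b := form A u w; set b' := form A w u.
have h1 := psdA (fun x => 1 * u x + w x).
have h2 := psdA (fun x => 'i * u x + w x).
rewrite -/(form _ _ _) formZDl !formZDr -/a -/b -/b' -/c in h1.
rewrite -/(form _ _ _) formZDl !formZDr -/a -/b -/b' -/c in h2.
have ea : a^* = a by apply/geC0_conj/psdA.
have ec : c^* = c by apply/geC0_conj/psdA.
move/geC0_conj: h1; move/geC0_conj: h2.
rewrite ?(rmorphD, rmorphM, rmorphN) /= ?(conjCK, rmorph1, conjCi, ea, ec).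
move=> /eqP; rewrite -subr_eq0 => /eqP h2 /eqP; rewrite -subr_eq0 => /eqP h1.
have e1 : b^* + b'^* - b - b' = 0 by rewrite -h1; ring.
have e2 : 'i * (b^* - b'^* + b - b') = 0 by rewrite -h2; ring.
move/eqP: e2; rewrite mulf_eq0 (negPf (neq0Ci C)) /= => /eqP e2.
suff : b'^* = b by move=> <-; rewrite conjCK.
apply/eqP; rewrite -subr_eq0; apply/eqP.
have two_neq0 : (2 : C) != 0 by rewrite pnatr_eq0.
rewrite (_ : b'^* - b = (b^* + b'^* - b - b' - (b^* - b'^* + b - b')) / 2).
  by rewrite e1 e2 subrr mul0r.
by field.
Qed.

(* Positivity at [c u - b^* w] gives [c (c a - |b|^2) >= 0]; when [c = 0],
   positivity at [(a + 1) w - b u] forces [b = 0]. *)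
Lemma psd_cauchy_schwarz u w :
  form A u w * (form A u w)^* <= form A u u * form A w w.
Proof.
have ha : 0 <= form A u u := psdA u.
have hc : 0 <= form A w w := psdA w.
have hb' := psd_form_conj u w.
set a := form A u u in ha *; set c := form A w w in hc *; set b := form A u w in hb' *.
have ea : a^* = a by apply: geC0_conj.
have ec : c^* = c by apply: geC0_conj.
move: hc; rewrite le0r => /orP [/eqP c0 | c_gt0].
  have h := psdA (fun x => (a + 1) * w x + (- b) * u x).
  rewrite -/(form _ _ _) form_lincomb -/a -/b -/c c0 psd_form_conj -/b in h.
  rewrite !(rmorphD, rmorphN, rmorph1) /= ea in h.
  have : 0 <= (a + 2) * (- (b * b^*)) by move: h; congr (_ <= _); ring.
  rewrite pmulr_rge0; last by apply: (@lt_le_trans _ _ 2); [|rewrite lerDr].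
  by rewrite oppr_ge0 c0 mulr0.
have h := psdA (fun x => c * u x + (- b^*) * w x).
rewrite -/(form _ _ _) form_lincomb -/a -/b -/c hb' in h.
rewrite !(rmorphD, rmorphN, rmorph1) /= ec conjCK in h.
have : 0 <= c * (c * a - b * b^*) by move: h; congr (_ <= _); ring.
by rewrite pmulr_rge0 // subr_ge0 (mulrC a).
Qed.

Lemma psd_diag_ge0 p : 0 <= A p p.
Proof. by rewrite -form_basis_vec; apply: psdA. Qed.

Lemma psd_entry_normsq_le p q : A p q * (A p q)^* <= A p p * A q q.
Proof. by rewrite -!form_basis_vec; apply: psd_cauchy_schwarz. Qed.

Lemma psd_trace_ge0 : 0 <= trace A.
Proof. by apply: sumr_ge0 => p _; apply: psd_diag_ge0. Qed.

Lemma psd_trace_eq0 p q : trace A = 0 -> A p q = 0.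
Proof.
move=> trA0.
have diag0 r : A r r = 0.
  by apply: (psumr_eq0P (P := predT) (F := fun r => A r r)) => // i _; apply: psd_diag_ge0.
have := psd_entry_normsq_le p q; rewrite !diag0 mul0r => normsq_le0.
by apply/eqP; rewrite -mul_conjC_eq0 eq_le normsq_le0 mul_conjC_ge0.
Qed.

Lemma psd_sum_normsq_le : \sum_p \sum_q A p q * (A p q)^* <= trace A * trace A.
Proof.
rewrite /trace mulr_suml; apply: ler_sum => p _.
by rewrite mulr_sumr; apply: ler_sum => q _; apply: psd_entry_normsq_le.
Qed.

End Psd.
End PsdForms.

(* Sedrakyan's inequality |sum a|^2 / sum t <= sum |a|^2 / t, obtained by expanding
   sum |a - t b|^2 / t >= 0 at b = (sum a) / (sum t). *)
Lemma sedrakyan (C : numClosedFieldType) (J : finType) (P : pred J) (t a : J -> C) :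
  (forall j, P j -> 0 <= t j) -> (forall j, P j -> t j = 0 -> a j = 0) ->
  \sum_(j | P j) t j != 0 ->
  (\sum_(j | P j) a j) * (\sum_(j | P j) a j)^* / \sum_(j | P j) t j
   <= \sum_(j | P j && (t j != 0)) a j * (a j)^* / t j.
Proof.
move=> t_ge0 t0_a0 T_neq0.
set S := \sum_(j | P j) a j; set T := \sum_(j | P j) t j in T_neq0 *.
set X := \sum_(j | _) _.
have conjT : T^* = T by apply/geC0_conj/sumr_ge0.
set b := S / T.
have sum_a : \sum_(j | P j && (t j != 0)) a j = S.
  by rewrite big_mkcondr; apply: eq_bigr => j Pj; case: eqP => // /(t0_a0 _ Pj) ->.
have sum_t : \sum_(j | P j && (t j != 0)) t j = T.
  by rewrite big_mkcondr; apply: eq_bigr => j Pj; case: eqP => // ->.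
have : 0 <= \sum_(j | P j && (t j != 0)) (a j - t j * b) * (a j - t j * b)^* / t j.
  apply: sumr_ge0 => j /andP [Pj _].
  by apply: divr_ge0; [exact: mul_conjC_ge0 | exact: t_ge0].
rewrite (eq_bigr (fun j => a j * (a j)^* / t j - (a j * b^* + b * (a j)^*)
                           + t j * (b * b^*))); last first.
  move=> j /andP [Pj tj_neq0].
  have conj_tj : (t j)^* = t j by apply/geC0_conj/t_ge0.
  by rewrite rmorphB rmorphM /= conj_tj; field.
rewrite big_split /= sumrB big_split /= -mulr_suml -mulr_sumr -mulr_suml.
rewrite -rmorph_sum /= sum_a sum_t -/X => expansion_ge0.
rewrite -subr_ge0; move: expansion_ge0; congr (_ <= _).
by rewrite /b rmorphM /= fmorphV /= conjT; field.
Qed.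

Section LinearMaps.
Variables (C : numClosedFieldType) (I J : finType) (L : op C I -> op C J).
Hypothesis linL : linear_map L.

Lemma linear_map0 : L (fun _ _ => 0) = (fun _ _ => 0).
Proof.
have := linL (-1) (fun _ _ => 0) (fun _ _ => 0).
have -> : (fun p q : I => -1 * (fun _ _ => 0 : C) p q + (fun _ _ => 0 : C) p q) =
          (fun _ _ => 0).
  by do 2 (apply: functional_extensionality => ?); rewrite mulr0 addr0.
move=> ->; do 2 (apply: functional_extensionality => ?).
by rewrite mulN1r addNr.
Qed.

Lemma linear_map_sum (K : Type) (r : seq K) (c : K -> C) (f : K -> op C I) :
  L (fun p q => \sum_(k <- r) c k * f k p q) =
  (fun x y => \sum_(k <- r) c k * L (f k) x y).
Proof.
elim: r => [|k0 r IH].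
  have -> : (fun p q : I => \sum_(k <- [::]) c k * f k p q) = (fun _ _ => 0).
    by do 2 (apply: functional_extensionality => ?); rewrite big_nil.
  by rewrite linear_map0; do 2 (apply: functional_extensionality => ?); rewrite big_nil.
have -> : (fun p q : I => \sum_(k <- k0 :: r) c k * f k p q) =
          (fun p q => c k0 * f k0 p q + (fun p q => \sum_(k <- r) c k * f k p q) p q).
  by do 2 (apply: functional_extensionality => ?); rewrite big_cons.
by rewrite linL IH; do 2 (apply: functional_extensionality => ?); rewrite big_cons.
Qed.

Lemma op_unit_expand (X : op C I) :
  X = (fun a b => \sum_(pq : I * I) X pq.1 pq.2 * unit_op C pq.1 pq.2 a b).
Proof.
apply: functional_extensionality => a; apply: functional_extensionality => b.
rewrite -(pair_big predT predT (fun p q => X p q * unit_op C p q a b)) /= /unit_op.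
rewrite -[LHS](sum_delta_l a (fun p => X p b)); apply: eq_bigr => p _.
rewrite -[LHS](sum_delta_l b (fun q => (p == a)%:R * X p q)); apply: eq_bigr => q _.
by rewrite (eq_sym a) (eq_sym b) -mulnb natrM; ring.
Qed.

Lemma linear_map_expand (X : op C I) x y :
  L X x y = \sum_p \sum_q X p q * L (unit_op C p q) x y.
Proof.
rewrite {1}(op_unit_expand X) (linear_map_sum _ _ (fun pq => unit_op C pq.1 pq.2)).
by rewrite (pair_big predT predT (fun p q => X p q * L (unit_op C p q) x y)).
Qed.
End LinearMaps.

Definition rank1 (C : numClosedFieldType) (I : finType) (v : I -> C) : op C I :=
  fun p q => v p * (v q)^*.

Lemma psd_rank1 (C : numClosedFieldType) (I : finType) (v : I -> C) : psd (rank1 v).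
Proof.
move=> u.
have -> : \sum_p \sum_q (u p)^* * rank1 v p q * u q =
          (\sum_p (u p)^* * v p) * (\sum_q (u q)^* * v q)^*.
  rewrite rmorph_sum mulr_suml; apply: eq_bigr => p _.
  by rewrite mulr_sumr; apply: eq_bigr => q _; rewrite rmorphM /= conjCK /rank1; ring.
exact: mul_conjC_ge0.
Qed.

Lemma sum_pair_ord1 (C : numClosedFieldType) (J : finType) (g : 'I_1 * J -> C) :
  \sum_(x : 'I_1 * J) g x = \sum_j g (ord0, j).
Proof.
transitivity (\sum_(p : 'I_1 * J | predT p.1 && predT p.2) g (p.1, p.2)).
  by apply: eq_bigr => -[].
by rewrite -(pair_big predT predT (fun a j => g (a, j))) big_ord1.
Qed.

Lemma exchange_big2 (C : numClosedFieldType) (A B D E : finType)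
    (f : A -> B -> D -> E -> C) :
  \sum_a \sum_b \sum_c \sum_e f a b c e = \sum_c \sum_e \sum_a \sum_b f a b c e.
Proof.
under eq_bigr do rewrite exchange_big.
rewrite exchange_big; apply: eq_bigr => c _.
by under eq_bigr do rewrite exchange_big; rewrite exchange_big.
Qed.

Section CompletelyPositive.
Variables (C : numClosedFieldType) (I J : finType) (L : op C I -> op C J).

(* Positivity of [L] itself is the case [k = 1] of complete positivity. *)
Lemma cp_form_rank1_ge0 (v : I -> C) (w : J -> C) :
  completely_positive L -> 0 <= form (L (rank1 v)) w w.
Proof.
move=> cpL.
have := cpL 1%N _ (psd_rank1 (fun x : 'I_1 * I => v x.2)) (fun z => w z.2).
by congr (_ <= _); rewrite sum_pair_ord1 /form; apply: eq_bigr => x _; rewrite sum_pair_ord1.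
Qed.

Lemma adjoint_rank1_psd (w : J -> C) :
  linear_map L -> completely_positive L -> psd (adjoint L (rank1 w)).
Proof.
move=> linL cpL v.
have := cp_form_rank1_ge0 v w cpL; rewrite -conjC_ge0; congr (_ <= _).
rewrite /form rmorph_sum /=.
under eq_bigr => x _.
  rewrite rmorph_sum; under eq_bigr => y _.
    rewrite (linear_map_expand linL) !rmorphM /= rmorph_sum mulr_sumr mulr_suml.
    under eq_bigr => p _ do rewrite rmorph_sum mulr_sumr mulr_suml.
    over.
  over.
rewrite /= exchange_big2; apply: eq_bigr => p _; apply: eq_bigr => q _.
rewrite /adjoint /hs mulr_sumr mulr_suml; apply: eq_bigr => x _.
rewrite mulr_sumr mulr_suml; apply: eq_bigr => y _.
by rewrite /rank1 !rmorphM /= !conjCK; ring.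
Qed.
End CompletelyPositive.

Section ProductBasis.
Variables (C : numClosedFieldType) (d N : nat).
Local Notation idx := {ffun 'I_N -> 'I_d}.

(* A one-sided inverse of a square matrix is two-sided. *)
Lemma orthonormal_basis_complete (e : 'I_d -> 'I_d -> C) :
  orthonormal_basis e -> forall p q, \sum_i e i p * (e i q)^* = (p == q)%:R.
Proof.
move=> onb p q.
pose A : 'M[C]_d := \matrix_(i, p) (e i p)^*.
pose B : 'M[C]_d := \matrix_(p, i) e i p.
have AB : A *m B = 1%:M.
  by apply/matrixP => i j; rewrite !mxE -onb; apply: eq_bigr => r _; rewrite !mxE.
have /matrixP /(_ p q) := mulmx1C AB; rewrite !mxE => <-.
by apply: eq_bigr => r _; rewrite !mxE.
Qed.

Definition agree_off (k : 'I_N) (x y : idx) : bool := [forall l, (l != k) ==> (x l == y l)].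

Lemma prod_eq_indicator (x y : idx) : \prod_k ((x k == y k)%:R : C) = (x == y)%:R.
Proof.
case: eqP => [-> | x_neq_y]; first by rewrite big1 // => k _; rewrite eqxx.
have [k x_neq_y_at_k] : exists k, x k != y k.
  apply/existsP; apply: contraT; rewrite negb_exists => /forallP eq_xy.
  by case: x_neq_y; apply/ffunP => k; move/negPn/eqP: (eq_xy k).
by rewrite (bigD1 k) //= (negPf x_neq_y_at_k) mul0r.
Qed.

Lemma prod_eq_indicator_off (k : 'I_N) (x y : idx) :
  \prod_(l | l != k) ((x l == y l)%:R : C) = (agree_off k x y)%:R.
Proof.
rewrite /agree_off; case: forallP => [agree | not_agree].
  by rewrite big1 // => l l_neq_k; move/implyP: (agree l) => /(_ l_neq_k) /eqP ->; rewrite eqxx.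
have [l] : exists l, ~~ ((l != k) ==> (x l == y l)).
  apply/existsP; apply: contraT; rewrite negb_exists => /forallP agree.
  by case: not_agree => l; move/negPn: (agree l).
rewrite negb_imply => /andP [l_neq_k x_neq_y_at_l].
by rewrite (bigD1 l) //= (negPf x_neq_y_at_l) mul0r.
Qed.

Variable e : 'I_N -> 'I_d -> 'I_d -> C.
Hypothesis onb : forall k, orthonormal_basis (e k).

Definition prod_basis_vec (j : idx) : idx -> C := fun x => \prod_k e k (j k) (x k).

Lemma rank1_prod_basis_vec j x y :
  rank1 (prod_basis_vec j) x y = \prod_k rank1 (e k (j k)) (x k) (y k).
Proof. by rewrite /rank1 /prod_basis_vec rmorph_prod -big_split. Qed.

Lemma prod_basis_complete x y : \sum_j rank1 (prod_basis_vec j) x y = (x == y)%:R.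
Proof.
under eq_bigr do rewrite rank1_prod_basis_vec.
rewrite -(bigA_distr_bigA (fun k a => rank1 (e k a) (x k) (y k))) -prod_eq_indicator.
by apply: eq_bigr => k _; apply: orthonormal_basis_complete.
Qed.

Lemma prod_basis_marginal k i x y :
  \sum_(j : idx | j k == i) rank1 (prod_basis_vec j) x y =
  rank1 (e k i) (x k) (y k) * (agree_off k x y)%:R.
Proof.
pose F l a := rank1 (e l a) (x l) (y l).
pose Fk l a := if l == k then (a == i)%:R * F l a else F l a.
transitivity (\sum_(j : idx) \prod_l Fk l (j l)).
  rewrite big_mkcond; apply: eq_bigr => j _; rewrite rank1_prod_basis_vec.
  rewrite (bigD1 k) //= [RHS](bigD1 k) //= /Fk eqxx.
  rewrite [in RHS](eq_bigr (fun l => F l (j l))); last by move=> l /negPf ->.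
  by case: (j k == i); rewrite ?mul1r ?mul0r.
rewrite -(bigA_distr_bigA Fk) /= (bigD1 k) //= /Fk eqxx.
rewrite (sum_delta_l i (F k)) -prod_eq_indicator_off; congr (_ * _).
by apply: eq_bigr => l /negPf ->; apply: orthonormal_basis_complete.
Qed.
End ProductBasis.

Section GramSum.
Variables (C : numClosedFieldType) (d : nat).
Implicit Types (K J : finType).

(* [G_op Phi e] is [gram_sum] of the family [Phi^*(|e_i><e_i|)]. *)
Definition gram_sum K (A : K -> op C 'I_d) : op C ('I_d * 'I_d)%type :=
  fun x y => \sum_(i | trace (A i) != 0) vec_outer (A i) x y / trace (A i).

Definition vec_dot (v : ('I_d * 'I_d)%type -> C) (X : op C 'I_d) : C :=
  \sum_x (v x)^* * X x.1 x.2.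

Lemma form_gram_sum K (A : K -> op C 'I_d) v :
  form (gram_sum A) v v =
  \sum_(i | trace (A i) != 0) vec_dot v (A i) * (vec_dot v (A i))^* / trace (A i).
Proof.
rewrite /form /gram_sum.
under eq_bigr do under eq_bigr do rewrite mulr_sumr mulr_suml.
under eq_bigr do rewrite exchange_big.
rewrite exchange_big; apply: eq_bigr => i _.
rewrite /vec_dot rmorph_sum !mulr_suml; apply: eq_bigr => x _.
rewrite mulr_sumr mulr_suml; apply: eq_bigr => y _.
by rewrite /vec_outer rmorphM /= conjCK; ring.
Qed.

Section PsdFamily.
Variables (K : finType) (A : K -> op C 'I_d).
Hypothesis psdA : forall i, psd (A i).

Lemma gram_sum_hermitian : hermitian_op (gram_sum A).
Proof.
move=> x y; rewrite /gram_sum rmorph_sum; apply: eq_bigr => i _.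
have conj_tr : (trace (A i))^* = trace (A i) by apply/geC0_conj/psd_trace_ge0.
by rewrite /vec_outer !rmorphM /= fmorphV /= conj_tr conjCK; ring.
Qed.

(* Each term has trace |A i|_2^2 / Tr (A i) <= Tr (A i). *)
Lemma trace_gram_sum_le : trace (gram_sum A) <= \sum_i trace (A i).
Proof.
rewrite /trace /gram_sum exchange_big /=.
apply: (@le_trans _ _ (\sum_(i | trace (A i) != 0) trace (A i))).
  apply: ler_sum => i tr_neq0; rewrite -mulr_suml /vec_outer.
  rewrite -(pair_bigA _ (fun p q => A i p q * (A i p q)^*)) /=.
  apply: (@le_trans _ _ (trace (A i) * trace (A i) / trace (A i))); last by rewrite mulfK.
  by apply: ler_wpM2r; [rewrite invr_ge0 psd_trace_ge0 | apply: psd_sum_normsq_le].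
rewrite [leRHS](bigID (fun i => trace (A i) != 0)) /= lerDl.
by apply: sumr_ge0 => i _; apply: psd_trace_ge0.
Qed.
End PsdFamily.

(* Sedrakyan's inequality on each fibre of [f]. *)
Lemma gram_sum_coarsen K J (M : J -> op C 'I_d) (f : J -> K) :
  (forall j, psd (M j)) ->
  op_ge (gram_sum M) (gram_sum (fun i p q => \sum_(j | f j == i) M j p q)).
Proof.
move=> psdM v; rewrite -/(form _ v v) form_sub subr_ge0 !form_gram_sum.
have dot_sum i : vec_dot v (fun p q => \sum_(j | f j == i) M j p q) =
                 \sum_(j | f j == i) vec_dot v (M j).
  by rewrite /vec_dot exchange_big; apply: eq_bigr => x _; rewrite mulr_sumr.
have tr_sum i : trace (fun p q => \sum_(j | f j == i) M j p q) =
                \sum_(j | f j == i) trace (M j).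
  by rewrite /trace exchange_big.
rewrite [leRHS](partition_big f predT) //= big_mkcond; apply: ler_sum => i _.
case: ifP => [tr_neq0 | _]; last first.
  apply: sumr_ge0 => j _.
  by apply: divr_ge0; [exact: mul_conjC_ge0 | apply: psd_trace_ge0].
rewrite dot_sum tr_sum; rewrite tr_sum in tr_neq0.
apply: le_trans (sedrakyan _ _ tr_neq0) _.
- by move=> j _; apply: psd_trace_ge0.
- move=> j _ /psd_trace_eq0 M0.
  by rewrite /vec_dot big1 // => x _; rewrite M0 ?mulr0.
by rewrite le_eqVlt (eq_bigl _ _ (fun j => andbC _ _)) eqxx.
Qed.
End GramSum.

Section Adjoint.
Variable C : numClosedFieldType.

Lemma trace_unit_op_diag (I : finType) (p : I) : trace (unit_op C p p) = 1.
Proof.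
by rewrite /trace /unit_op (bigD1 p) //= eqxx big1 ?addr0 // => r /negPf ->.
Qed.

Lemma sum_hs_rank1_complete (I K : finType) (w : K -> I -> C) (A : op C I) :
  (forall x y, \sum_k rank1 (w k) x y = (x == y)%:R) ->
  \sum_k hs A (rank1 (w k)) = (trace A)^*.
Proof.
move=> complete; rewrite /hs exchange_big /trace rmorph_sum /=; apply: eq_bigr => x _.
rewrite exchange_big -(sum_delta_r x (fun y => (A x y)^*)); apply: eq_bigr => y _.
by rewrite -mulr_sumr complete eq_sym.
Qed.

Lemma sum_trace_adjoint_rank1 (I J K : finType) (L : op C I -> op C J) (w : K -> J -> C) :
  trace_preserving L -> (forall x y, \sum_k rank1 (w k) x y = (x == y)%:R) ->
  \sum_k trace (adjoint L (rank1 (w k))) = #|I|%:R.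
Proof.
move=> tpL complete; rewrite /trace exchange_big /= -sumr_const.
apply: eq_bigr => p _; rewrite /adjoint sum_hs_rank1_complete //.
by rewrite tpL trace_unit_op_diag rmorph1.
Qed.
End Adjoint.

Section Marginals.
Variables (C : numClosedFieldType) (d N : nat).
Local Notation idx := {ffun 'I_N -> 'I_d}.

Lemma hs_ptrace_keep_rank1 (k : 'I_N) (A : op C idx) (v : 'I_d -> C) :
  hs (ptrace_keep k A) (rank1 v) =
  \sum_x \sum_y (A x y)^* * (rank1 v (x k) (y k) * (agree_off k x y)%:R).
Proof.
symmetry; rewrite /hs /ptrace_keep (partition_big (fun x : idx => x k) predT) //=.
apply: eq_bigr => a _.
under [RHS]eq_bigr do rewrite rmorph_sum mulr_suml.
rewrite [RHS]exchange_big; apply: eq_big => [x | x /eqP xk]; first by [].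
under [RHS]eq_bigr do rewrite rmorph_sum mulr_suml.
rewrite (eq_bigr (fun y => if agree_off k x y then (A x y)^* * rank1 v (x k) (y k) else 0)).
  rewrite -big_mkcond (partition_big (fun y : idx => y k) predT) //=.
  apply: eq_bigr => b _; apply: eq_big => [y | y /andP [_ /eqP yk]].
    by rewrite andbC.
  by rewrite xk yk.
by move=> y _; case: agree_off; rewrite ?mulr1 ?mulr0.
Qed.

Variables (e : 'I_N -> 'I_d -> 'I_d -> C) (L : op C 'I_d -> op C idx).
Hypothesis onb : forall k, orthonormal_basis (e k).

Lemma adjoint_marginal (Phi_k : op C 'I_d -> op C 'I_d) k i :
  (forall X, ptrace_keep k (L X) = Phi_k X) ->
  adjoint Phi_k (rank1 (e k i)) =
  (fun p q => \sum_(j : idx | j k == i) adjoint L (rank1 (prod_basis_vec e j)) p q).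
Proof.
move=> marginal; apply: functional_extensionality => p.
apply: functional_extensionality => q.
rewrite /adjoint -marginal hs_ptrace_keep_rank1 /hs [RHS]exchange_big /=.
apply: eq_bigr => x _; rewrite [RHS]exchange_big /=; apply: eq_bigr => y _.
by rewrite -mulr_sumr prod_basis_marginal.
Qed.
End Marginals.

Unset Implicit Arguments.
Local Open Scope complex_scope.

Theorem theorem4p7 (R : realType) (d N : nat) (hd : (0 < d)%N)
  (Phi : 'I_N -> op R[i] 'I_d -> op R[i] 'I_d)
  (hPhi : forall k : 'I_N, channel (Phi k))
  (e : 'I_N -> 'I_d -> 'I_d -> R[i])
  (he : forall k : 'I_N, orthonormal_basis (e k))
  (hSDP : forall H : op R[i] ('I_d * 'I_d)%type,
      hermitian_op H ->
      (forall k : 'I_N, op_ge H (G_op (Phi k) (e k))) ->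
      (d%:R : R[i]) < trace H) :
  ~ compatible Phi.
Proof.
move=> [L [[linL cpL tpL] marginals]].
pose M j := adjoint L (rank1 (prod_basis_vec e j)).
have psdM j : psd (M j) by apply: adjoint_rank1_psd.
have trM : \sum_j trace (M j) = d%:R.
  by rewrite sum_trace_adjoint_rank1 ?card_ord //; apply: prod_basis_complete.
have G_coarse k : G_op (Phi k) (e k) =
    gram_sum (fun i p q => \sum_(j : {ffun 'I_N -> 'I_d} | j k == i) M j p q).
  rewrite -[G_op _ _]/(gram_sum (fun i => adjoint (Phi k) (rank1 (e k i)))).
  by congr gram_sum; apply: functional_extensionality => i; apply: adjoint_marginal.
have H_ge_G k : op_ge (gram_sum M) (G_op (Phi k) (e k)).
  by rewrite G_coarse; apply: gram_sum_coarsen.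
have := lt_le_trans (hSDP _ (gram_sum_hermitian psdM) H_ge_G) (trace_gram_sum_le psdM).
by rewrite trM ltxx.
Qed.
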